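(* Consider the clustering defined in the context, for a graph $G=(V,E)$ with integer weights $w\colon E\to\{1,\dots,W\}$ and parameters $p\in(0,1)$, $r\in\mathbb{N}$. For every outcome of the sampled values, each cluster $U$ has strong diameter at most $2r$, i.e., $d_{G[U]}(x,y)\leq 2r$ for all $x,y\in U$.
   Context: Setting (the clustering): $G=(V,E)$ is a graph with integer edge weights $w\colon E\to\{1,\dots,W\}$, $d_G$ the weighted shortest-path distance, and each vertex has a distinct identifier $\mathrm{ID}(v)$. Let $p\in(0,1)$ and $r\in\mathbb{N}$. Let $\mathrm{GeomCap}(p,r)$ be the distribution on $\{0,\dots,r\}$ with $\Pr[=i]=p(1-p)^i$ for $0\leq i\leq r-1$ and $\Pr[=r]=(1-p)^r$. Each vertex $v$ independently samples $\delta_v\sim\mathrm{GeomCap}(p,r)$. For $u,x\in V$ define $d^{(u)}(s,x):=r-\delta_u+d_G(u,x)$ and the level $d_{G'}(s,x):=\min_{u\in V} d^{(u)}(s,x)$. The cluster center $c_x$ of $x$ is the vertex $u$ with smallest $\mathrm{ID}$ among those with $d^{(u)}(s,x)=d_{G'}(s,x)$; the cluster of a center $c$ is $\{x\in V: c_x=c\}$. For $U\subseteq V$, $G[U]$ is the induced subgraph with weighted distance $d_{G[U]}$. *)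

From mathcomp Require Import all_boot.
Set Implicit Arguments. Unset Strict Implicit. Unset Printing Implicit Defensive.

Section Clustering.
Variables (T : finType) (e : rel T) (w : T -> T -> nat).

Fixpoint walk_weight (x : T) (s : seq T) : nat :=
  match s with
  | [::] => 0
  | y :: s' => w x y + walk_weight y s'
  end.

Definition reach_in (U : T -> Prop) (x y : T) (k : nat) : Prop :=
  exists s : seq T,
    [/\ path e x s, U x, (forall z, z \in s -> U z), last x s = y
      & walk_weight x s <= k].

(* d_{G[U]}(x,y) = d  (the weighted shortest-path distance in the induced
   subgraph G[U]; no such d exists when y is unreachable, i.e. d = +oo) *)
Definition dist_in (U : T -> Prop) (x y : T) (d : nat) : Prop :=
  reach_in U x y d /\ forall k, reach_in U x y k -> d <= k.

Definition distG (x y : T) (d : nat) : Prop := dist_in (fun _ => True) x y d.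

Variables (r : nat) (delta : T -> nat) (ID : T -> nat).

(* d^{(u)}(s,x) = r - delta_u + d_G(u,x)  (equals l) *)
Definition dval (u x : T) (l : nat) : Prop :=
  exists d, distG u x d /\ l = r - delta u + d.

(* d_{G'}(s,x) = min_u d^{(u)}(s,x)  (equals l) *)
Definition level (x : T) (l : nat) : Prop :=
  (exists u, dval u x l) /\ forall u l', dval u x l' -> l <= l'.

Definition center (x c : T) : Prop :=
  exists l, [/\ level x l, dval c x l & forall u, dval u x l -> ID c <= ID u].

Definition cluster (c : T) : T -> Prop := fun x => center x c.

End Clustering.

(* If x lies in the cluster of c, then so does every vertex z on a shortest
   c-x path of G.  Indeed, for every u,
     d^(u)(s,x) - d_G(z,x) <= d^(u)(s,z)   and   d^(c)(s,z) = d^(c)(s,x) - d_G(z,x),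
   so minimality of d^(c)(s,x) at x carries over to z, and any u tying with c
   at z also ties with c at x, where the ID tie-break already chose c.  Hence
   the cluster contains a c-x path of weight
   d_G(c,x) <= d_{G'}(s,x) <= d^(x)(s,x) <= r, and two such paths through c
   join any two vertices of the cluster within weight 2r. *)

From Stdlib Require Import Classical.
From mathcomp Require Import all_boot zify.

Set Implicit Arguments. Unset Strict Implicit. Unset Printing Implicit Defensive.

Section Walks.
Variables (T : finType) (e : rel T) (w : T -> T -> nat).

Lemma walk_weight_cat x s1 s2 :
  walk_weight w x (s1 ++ s2) = walk_weight w x s1 + walk_weight w (last x s1) s2.
Proof. by elim: s1 x => [|y s IH] x //=; rewrite IH addnA. Qed.

Lemma reach_in_refl U x : U x -> reach_in e w U x x 0.
Proof. by exists [::]. Qed.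

Lemma reach_in_edge U x y : e x y -> U x -> U y -> reach_in e w U x y (w x y).
Proof.
move=> exy Ux Uy; exists [:: y]; split => //=; first by rewrite exy.
- by move=> z /[!inE] /eqP ->.
- by rewrite addn0.
Qed.

Lemma reach_in_le U x y a b :
  a <= b -> reach_in e w U x y a -> reach_in e w U x y b.
Proof. by move=> ab [s [p Ux Us l ws]]; exists s; split => //; apply: leq_trans ab. Qed.

Lemma reach_in_cat U x y z a b :
  reach_in e w U x y a -> reach_in e w U y z b -> reach_in e w U x z (a + b).
Proof.
move=> [s1 [p1 Ux Us1 l1 w1]] [s2 [p2 Uy Us2 l2 w2]].
exists (s1 ++ s2); split => //.
- by rewrite cat_path p1 l1 p2.
- by move=> t /[!mem_cat] /orP[/Us1|/Us2].
- by rewrite last_cat l1.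
- by rewrite walk_weight_cat l1 leq_add.
Qed.

Lemma reach_in_split U x s z :
  path e x s -> U x -> (forall t, t \in s -> U t) -> z \in x :: s ->
  exists a b, [/\ reach_in e w U x z a, reach_in e w U z (last x s) b
                & a + b = walk_weight w x s].
Proof.
move=> p Ux Us /predU1P[-> | zs].
  by exists 0, (walk_weight w x s); split => //; [apply: reach_in_refl | exists s].
move: p Us; case/path.splitP: zs => s1 s2.
rewrite cat_path last_cat last_rcons walk_weight_cat last_rcons => /andP[p1 p2] Us.
have Uz : U z by apply: Us; rewrite mem_cat mem_rcons mem_head.
exists (walk_weight w x (rcons s1 z)), (walk_weight w z s2); split => //.
- exists (rcons s1 z); split => //; last by rewrite last_rcons.
  by move=> t ts; apply: Us; rewrite mem_cat ts.
- by exists s2; split => // t ts; apply: Us; rewrite mem_cat ts orbT.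
Qed.

Lemma reach_in_sym U x y k :
  symmetric e -> (forall a b, e a b -> w a b = w b a) ->
  reach_in e w U x y k -> reach_in e w U y x k.
Proof.
move=> esym wsym [s [p Ux Us <- ws]]; apply: (reach_in_le ws) => {ws}.
elim: s x p Ux Us => [|t s IH] x /=; first by move=> _ Ux _; apply: reach_in_refl.
move=> /andP[ext pt] Ux Us.
have Ut : U t by apply: Us; rewrite mem_head.
have Hts : reach_in e w U (last t s) t (walk_weight w t s).
  by apply: IH => // z zs; apply: Us; rewrite inE zs orbT.
have Htx : reach_in e w U t x (w t x) by apply: reach_in_edge; rewrite // esym.
by rewrite addnC wsym //; apply: reach_in_cat Hts Htx.
Qed.

Lemma dist_in_unique U x y d1 d2 :
  dist_in e w U x y d1 -> dist_in e w U x y d2 -> d1 = d2.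
Proof.
by move=> [r1 min1] [r2 min2]; apply/eqP; rewrite eqn_leq min1 ?min2.
Qed.

Lemma dist_in_exists U x y k :
  reach_in e w U x y k -> exists2 d, dist_in e w U x y d & d <= k.
Proof.
elim/ltn_ind: k => k IH Hk.
case: (classic (exists2 j, j < k & reach_in e w U x y j)) => [[j jk Hj]|none].
  by have [d Hd dj] := IH j jk Hj; exists d => //; apply: leq_trans dj (ltnW jk).
exists k => //; split => // j Hj; rewrite leqNgt; apply/negP => jk.
by apply: none; exists j.
Qed.

End Walks.

Section Clusters.
Variables (T : finType) (e : rel T) (w : T -> T -> nat).
Variables (r : nat) (delta : T -> nat) (ID : T -> nat).

Local Notation reachG := (reach_in e w (fun _ => True)).
Local Notation distG := (distG e w).
Local Notation dval := (dval e w r delta).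
Local Notation center := (center e w r delta ID).

Lemma dval_self u : dval u u (r - delta u).
Proof. by exists 0; split; [split => //; apply: reach_in_refl | rewrite addn0]. Qed.

Lemma dval_reach u z x l b :
  dval u z l -> reachG z x b -> exists2 l', dval u x l' & l' <= l + b.
Proof.
move=> [d [[Hd _] ->]] Hb.
have [d' Hd' d'_le] := dist_in_exists (reach_in_cat Hd Hb).
by exists (r - delta u + d'); [exists d' | lia].
Qed.

Lemma center_dist_le x c d : center x c -> distG c x d -> d <= r.
Proof.
move=> [l [[_ lev_min] [d' [Hd' l_def]] _]] Hd; subst l.
have := lev_min x _ (dval_self x); rewrite (dist_in_unique Hd' Hd); lia.
Qed.

Lemma center_between x c z d a b :
  center x c -> distG c x d -> reachG c z a -> reachG z x b -> a + b <= d ->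
  center z c.
Proof.
move=> [l [[_ lev_min] [d' [Hd' l_def]] ID_min]] Hd Ha Hb ab; subst l.
rewrite (dist_in_unique Hd' Hd) in lev_min ID_min.
have [a' Ha' a'_le] := dist_in_exists Ha.
exists (r - delta c + a'); split.
- split; first by exists c, a'.
  move=> u l Hu; have [l' Hux l'_le] := dval_reach Hu Hb.
  have := lev_min _ _ Hux; lia.
- by exists a'.
- move=> u Hu; have [l' Hux l'_le] := dval_reach Hu Hb.
  have := lev_min _ _ Hux => l'_ge.
  by apply: ID_min; have -> : r - delta c + d = l' by lia.
Qed.

Lemma cluster_reach_center c x :
  cluster e w r delta ID c x ->
  exists2 d, reach_in e w (cluster e w r delta ID c) c x d & d <= r.
Proof.
move=> Hx; have [l [_ [d [Hd _]] _]] := Hx.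
exists d; last exact: center_dist_le Hx Hd.
have [[s [p _ _ ls ws]] _] := Hd.
have on_walk z : z \in c :: s -> cluster e w r delta ID c z.
  move=> /(reach_in_split w p I (fun _ _ => I)) [a [b [Ha Hb ab]]].
  by rewrite ls in Hb; apply: center_between Hx Hd Ha Hb _; rewrite ab.
exists s; split => //; first by apply: on_walk; rewrite mem_head.
by move=> z zs; apply: on_walk; rewrite inE zs orbT.
Qed.

End Clusters.

Theorem corollary8 (T : finType) (e : rel T) (w : T -> T -> nat) (W : nat)
    (ID : T -> nat) (r : nat) (delta : T -> nat) :
  symmetric e -> irreflexive e ->
  (forall x y, e x y -> w x y = w y x) ->
  (forall x y, e x y -> 1 <= w x y <= W) ->
  injective ID ->
  (forall v, delta v <= r) ->
  forall c x y : T,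
    cluster e w r delta ID c x -> cluster e w r delta ID c y ->
    exists d, dist_in e w (cluster e w r delta ID c) x y d /\ d <= 2 * r.
Proof.
move=> esym _ wsym _ _ _ c x y Hx Hy.
have [dx Hcx dx_le] := cluster_reach_center Hx.
have [dy Hcy dy_le] := cluster_reach_center Hy.
have Hxy := reach_in_cat (reach_in_sym esym wsym Hcx) Hcy.
have [d Hd d_le] := dist_in_exists Hxy.
by exists d; split => //; lia.
Qed.
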